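(* Let $\delta\in(0,1)$ and $c_2(\delta,d):=\mathbb{E}_{\mathbf{x}\sim U^d}[\mathbf{x}[2]^2\mid\mathbf{x}[1]\ge\delta]$. Then $$c_2(\delta,d)\ge\frac{1}{3d}\left(\frac34-\frac12\delta-\frac14\delta^2\right)^3.$$
   Context: $U^d$ denotes the uniform distribution over the $d$-dimensional unit sphere; $\mathbf{x}[i]$ is the $i$-th coordinate of $\mathbf{x}$. *)

From HB Require Import structures.
From mathcomp Require Import all_boot all_order all_algebra.
From mathcomp Require Import all_classical all_reals all_analysis.
Set Implicit Arguments. Unset Strict Implicit. Unset Printing Implicit Defensive.
Import Order.TTheory GRing.Theory Num.Theory.
Local Open Scope classical_set_scope.
Local Open Scope ring_scope.

(* Points of R^d are represented as d-tuples of reals, with the product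
   (= Borel) sigma-algebra provided by mathcomp-analysis. *)

Definition unit_sphere (R : realType) (d : nat) : set (d.-tuple R) :=
  [set x | \sum_(i < d) (tnth x i) ^+ 2 = 1].

Definition tmap (R : realType) (d : nat) (Q : 'M[R]_d) (x : d.-tuple R)
  : d.-tuple R :=
  [tuple (((\row_(j < d) tnth x j) *m Q) 0 i) | i < d].

(* P is the uniform distribution U^d on the unit sphere: the (unique)
   probability measure on R^d concentrated on the unit sphere and invariant
   under every orthogonal transformation. *)
Definition is_uniform_sphere (R : realType) (d : nat)
  (P : probability (d.-tuple R) R) : Prop :=
  P (@unit_sphere R d) = 1%E /\
  forall Q : 'M[R]_d, Q *m Q^T = 1%:M ->
    forall A : set (d.-tuple R), measurable A ->
      P (tmap Q @^-1` A) = P A.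

(* c_2(delta,d) = E_{x ~ U^d}[ x[2]^2 | x[1] >= delta ]
   = E[x[2]^2 1{x[1] >= delta}] / P(x[1] >= delta)
   (coordinates are 1-indexed in the paper, 0-indexed here). *)
Definition c2 (R : realType) (d : nat) (P : probability (d.-tuple R) R)
  (delta : R) : R :=
  fine (\int[P]_(x in [set x : d.-tuple R | delta <= nth 0 x 0])
          ((nth 0 x 1) ^+ 2)%:E)
  / fine (P [set x : d.-tuple R | delta <= nth 0 x 0]).

From HB Require Import structures.
From mathcomp Require Import all_boot all_order all_algebra.
From mathcomp Require Import all_classical all_reals all_analysis.
From mathcomp Require Import perm fingroup measurable_realfun ring lra.
Import Order.TTheory GRing.Theory Num.Theory.
Set Implicit Arguments. Unset Strict Implicit. Unset Printing Implicit Defensive.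
Local Open Scope classical_set_scope.
Local Open Scope ring_scope.

(* Let A = {x_1 >= delta} and C = {x_1 >= s} with s^2 = (5 + 3 delta) / 8.  By
   rotation invariance every cap {<x, u> >= s}, |u| = 1, has the measure of C.
   The two caps around u = (c, +-g, 0, ..., 0), where c^2 = (1 + delta) / 2 and
   g^2 = (1 - delta) / 2, are disjoint on the sphere and contained in A, so
   P(C) <= P(A) / 2: at least half of A lies in the band x_1 < s, where
   x_2^2 + ... + x_d^2 >= 1 - s^2 = 3 (1 - delta) / 8.  As the coordinates
   2, ..., d play symmetric roles, (d - 1) E[x_2^2; A] >= 3 (1 - delta) / 16 P(A).
   Finally P(A) > 0 because finitely many caps of height delta cover the sphere,
   so c_2 >= 3 (1 - delta) / (16 (d - 1)), which dominates the stated bound. *)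

Section real_inequalities.
Variable R : realFieldType.
Implicit Types a b c g s x y : R.

Lemma caps_disjoint c s b x y : 0 <= c < s -> x ^+ 2 + y ^+ 2 <= 1 ->
  s <= c * x + b * y -> s <= c * x - b * y -> False.
Proof.
move=> /andP[c0 cs] xy1 h1 h2.
have x1 : x <= 1 by nra.
have : c * x <= c by rewrite ler_piMr.
lra.
Qed.

(* Squaring [s - c x <= g y] gives [q x <= 0] for [q z = z^2 - 2 s c z + s^2 - g^2];
   the hypotheses say that [q a >= 0] with [a] left of the vertex [s c]. *)
Lemma cap_sub_halfplane c g s a x y : 0 <= c -> 0 <= g -> c ^+ 2 + g ^+ 2 = 1 ->
  c * a <= s -> a <= s * c -> 2 * s * c * a <= a ^+ 2 + s ^+ 2 - g ^+ 2 ->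
  x ^+ 2 + y ^+ 2 <= 1 -> s <= c * x + g * y -> a <= x.
Proof.
move=> c0 g0 cg1 cas asc qa xy1 hs; rewrite leNgt; apply/negP => xa.
have sx : 0 <= s - c * x by have := ler_wpM2l c0 (ltW xa); lra.
have : (s - c * x) ^+ 2 <= g ^+ 2 * (1 - x ^+ 2).
  apply: (@le_trans _ _ ((g * y) ^+ 2)); first by rewrite ler_pXn2r ?nnegrE //; lra.
  by rewrite exprMn ler_wpM2l ?sqr_ge0 //; lra.
have : 0 < (a - x) * (2 * s * c - a - x) by apply: mulr_gt0; lra.
nra.
Qed.

Lemma cube_bound (delta k : R) : 0 < delta < 1 -> 1 <= k ->
  (3 * (k + 1))^-1 * (3 / 4 - delta / 2 - delta ^+ 2 / 4) ^+ 3
    <= 3 * (1 - delta) / (16 * k).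
Proof.
move=> /andP[d0 d1] k1.
set f := 3 / 4 - _ - _.
(* [f = (1 - delta) (3 + delta) / 4] is at most [3 / 4] and at most [1 - delta] *)
have f0 : 0 <= f by rewrite /f; nra.
have f3 : f ^+ 3 <= (3 / 4) ^+ 2 * (1 - delta).
  rewrite exprSr; apply: ler_pM; rewrite ?exprn_ge0 //; last by rewrite /f; nra.
  by rewrite ler_pXn2r ?nnegrE //; rewrite /f; nra.
rewrite -ler_pdivlMl ?invr_gt0; last lra.
rewrite invrK; apply: le_trans f3 _.
rewrite -subr_ge0.
have -> : 3 * (k + 1) * (3 * (1 - delta) / (16 * k)) - (3 / 4) ^+ 2 * (1 - delta)
   = 9 * (1 - delta) / (16 * k) by field; lra.
apply: divr_ge0; lra.
Qed.

Lemma cap_parameters delta c g s : 0 < delta < 1 -> 0 <= c -> 0 <= s ->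
  c ^+ 2 = (1 + delta) / 2 -> g ^+ 2 = (1 - delta) / 2 -> s ^+ 2 = (5 + 3 * delta) / 8 ->
  [/\ 0 <= c < s, delta <= s, c * delta <= s,
    delta <= s * c & 2 * s * c * delta <= delta ^+ 2 + s ^+ 2 - g ^+ 2].
Proof.
move=> /andP[d0 d1] c0 s0 c2 g2 s2; have d0' := ltW d0.
have sc2 : (s * c) ^+ 2 = (5 + 3 * delta) * (1 + delta) / 16 by rewrite exprMn s2 c2; field.
split.
- by rewrite c0 /= -(ltr_pXn2r (n := 2)) ?nnegrE // c2 s2; lra.
- by rewrite -(ler_pXn2r (n := 2)) ?nnegrE // s2; nra.
- rewrite -(ler_pXn2r (n := 2)) ?nnegrE ?mulr_ge0 // exprMn c2 s2.
  have : 0 < (1 - delta) * (5 + 8 * delta + 4 * delta ^+ 2) by apply: mulr_gt0; nra.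
  by nra.
- rewrite -(ler_pXn2r (n := 2)) ?nnegrE ?mulr_ge0 // sc2.
  have : 0 < (1 - delta) * (5 + 13 * delta) by apply: mulr_gt0; lra.
  by nra.
set q := delta ^+ 2 + (1 + 7 * delta) / 8.
have q0 : 0 <= q by rewrite /q; nra.
have p0 : 0 <= 2 * (s * c) * delta by rewrite !mulr_ge0.
have sq : (2 * (s * c) * delta) ^+ 2 <= q ^+ 2.
  rewrite -subr_ge0.
  have -> : q ^+ 2 - (2 * (s * c) * delta) ^+ 2
      = (1 - delta) ^+ 2 * (16 * delta ^+ 2 + 16 * delta + 1) / 64.
    by rewrite !exprMn s2 c2 /q; field.
  by apply: divr_ge0 => //; apply: mulr_ge0; [exact: sqr_ge0 | nra].
have {}sq : 2 * (s * c) * delta <= q by rewrite -(ler_pXn2r (n := 2)) ?nnegrE.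
rewrite /q in sq; lra.
Qed.

End real_inequalities.

Section near_direction.
Variables (R : rcfType) (d : nat).
Implicit Types x v : 'I_d -> R.

Lemma sqrt_perturb_le (delta t E : R) : 0 < delta < 1 ->
  - ((1 - delta) / 2) <= t -> 0 <= E -> E <= ((1 - delta) / 2) ^+ 2 ->
  delta * Num.sqrt (1 + 2 * t + E) <= 1 + t.
Proof.
move=> /andP[d0 d1] ht E0 hE.
have lhs0 : 0 <= delta * Num.sqrt (1 + 2 * t + E) by rewrite mulr_ge0 ?sqrtr_ge0 ?ltW.
have rhs0 : 0 <= 1 + t by lra.
rewrite -(ler_pXn2r (n := 2)) ?nnegrE // exprMn sqr_sqrtr; last lra.
have h1 : ((1 + delta) / 2) ^+ 2 <= (1 + t) ^+ 2 by rewrite ler_pXn2r ?nnegrE //; lra.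
have h2 : delta ^+ 2 * E <= E by rewrite ler_piMl // expr_le1 //; lra.
have h3 : 0 <= delta ^+ 2 * t ^+ 2 by rewrite mulr_ge0 ?sqr_ge0.
have h4 : (1 - delta ^+ 2) * ((1 + delta) / 2) ^+ 2 <= (1 - delta ^+ 2) * (1 + t) ^+ 2.
  by rewrite ler_wpM2l //; nra.
have h5 : ((1 - delta) / 2) ^+ 2 <= (1 - delta ^+ 2) * ((1 + delta) / 2) ^+ 2.
  rewrite -subr_ge0.
  have -> : (1 - delta ^+ 2) * ((1 + delta) / 2) ^+ 2 - ((1 - delta) / 2) ^+ 2
    = (1 - delta) * ((1 + delta) ^+ 3 - (1 - delta)) / 4 by field.
  by apply: divr_ge0 => //; apply: mulr_ge0; nra.
have -> : delta ^+ 2 * (1 + 2 * t + E) = (1 + t) ^+ 2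
    - ((1 - delta ^+ 2) * (1 + t) ^+ 2 + delta ^+ 2 * t ^+ 2 - delta ^+ 2 * E) by ring.
lra.
Qed.

Lemma near_unit_dir (delta : R) x v : 0 < delta < 1 -> \sum_i x i ^+ 2 = 1 ->
  \sum_i (v i - x i) ^+ 2 <= ((1 - delta) / 2) ^+ 2 ->
  0 < \sum_i v i ^+ 2 /\ delta * Num.sqrt (\sum_i v i ^+ 2) <= \sum_i x i * v i.
Proof.
move=> hd x1 hE; have /andP[d0 d1] := hd.
set eta := (1 - delta) / 2; set e := fun i => v i - x i.
set t := \sum_i x i * e i; set E := \sum_i e i ^+ 2.
have {}hE : E <= eta ^+ 2 by [].
have E0 : 0 <= E by apply: sumr_ge0 => i _; exact: sqr_ge0.
have vE : \sum_i v i ^+ 2 = \sum_i x i ^+ 2 + 2 * t + E.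
  by rewrite /t /E mulr_sumr -!big_split; apply: eq_bigr => i _; rewrite /e /=; ring.
have xvE : \sum_i x i * v i = \sum_i x i ^+ 2 + t.
  by rewrite /t -big_split; apply: eq_bigr => i _; rewrite /e /=; ring.
rewrite x1 in vE xvE.
(* [0 <= |eta x + e|^2 = eta^2 + 2 eta t + E] bounds [t] from below *)
have ht : - eta <= t.
  have : 0 <= \sum_i (eta * x i + e i) ^+ 2 by apply: sumr_ge0 => i _; exact: sqr_ge0.
  have -> : \sum_i (eta * x i + e i) ^+ 2 = eta ^+ 2 * \sum_i x i ^+ 2 + 2 * eta * t + E.
    by rewrite /t /E !mulr_sumr -!big_split; apply: eq_bigr => i _ /=; ring.
  rewrite x1 mulr1 => h.
  have eta0 : 0 < eta by rewrite /eta; lra.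
  have : 0 <= eta * (eta + t) by nra.
  by rewrite pmulr_rge0 //; lra.
rewrite vE xvE; split; first by rewrite /eta in ht; lra.
exact: sqrt_perturb_le hd ht E0 hE.
Qed.

End near_direction.

Section householder.
Variables (R : realFieldType) (n : nat).

Definition householder (w : 'rV[R]_n) : 'M[R]_n :=
  1%:M - (2 / (w *m w^T) 0 0) *: (w^T *m w).

Lemma householder_orthogonal w : householder w *m (householder w)^T = 1%:M.
Proof.
set a := (w *m w^T) 0 0; set k := 2 / a; set W := w^T *m w.
have WW : W *m W = a *: W.
  by rewrite /W mulmxA -(mulmxA w^T) [w *m w^T]mx11_scalar mul_mx_scalar -scalemxAl.
have WT : W^T = W by rewrite /W trmx_mul trmxK.
have kka : k * k * a = k + k.
  rewrite /k; have [->|a0] := eqVneq a 0; last by field.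
  by rewrite invr0 !(mulr0, mul0r, addr0).
rewrite /householder -/a -/k -/W [(_ - _)^T]linearB /= [(_ *: _)^T]linearZ /= trmx1 WT.
rewrite mulmxBr mulmx1 mulmxBl mul1mx -scalemxAr -scalemxAl WW !scalerA kka.
by rewrite scalerDl opprB addrK subrK.
Qed.

End householder.

Lemma orthogonal_col0 (R : realFieldType) (n : nat) (u : 'rV[R]_n.+1) :
  \sum_i u 0 i ^+ 2 = 1 -> exists Q : 'M[R]_n.+1, Q *m Q^T = 1%:M /\ forall i, Q i ord0 = u 0 i.
Proof.
move=> u1; have [u01|u0] := eqVneq (u 0 ord0) 1.
  have rest0 : \sum_(i | i != ord0) u 0 i ^+ 2 = 0.
    by move: u1; rewrite (bigD1 ord0) //= u01; lra.
  exists 1%:M; rewrite trmx1 mulmx1; split=> // i; rewrite !mxE eq_sym.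
  have [-> //|i0] := eqVneq i ord0.
  by apply/esym/eqP; rewrite -sqrf_eq0; apply/eqP/(psumr_eq0P _ rest0) => // j _; exact: sqr_ge0.
set w := delta_mx 0 ord0 - u.
(* the reflection exchanging [e_0] and [u] *)
exists (householder w); split; first exact: householder_orthogonal.
have wE i : w 0 i = (i == ord0)%:R - u 0 i by rewrite !mxE eqxx.
clearbody w.
have aE : (w *m w^T) 0 0 = 2 * (1 - u 0 ord0).
  rewrite mxE (bigD1 ord0) //= mxE wE eqxx.
  rewrite (eq_bigr (fun i => u 0 i ^+ 2)); last by move=> i /negbTE i0; rewrite mxE wE i0 sub0r mulrNN -expr2.
  move: u1; rewrite (bigD1 ord0) //= => u1.
  have -> : \sum_(i | i != ord0) u 0 i ^+ 2 = 1 - u 0 ord0 ^+ 2 by lra.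
  ring.
move=> i; rewrite /householder aE !mxE big_ord1 !mxE !wE eqxx.
have : 1 - u 0 ord0 != 0 by rewrite subr_eq0 eq_sym.
by case: (i == ord0) => /= ?; field.
Qed.

Section tuple_maps.
Variables (R : realType) (d : nat).
Local Notation T := (d.-tuple R).

Definition tdot (x : T) (u : 'rV[R]_d) : R := \sum_i tnth x i * u 0 i.

Lemma tnth_tmap (Q : 'M[R]_d) x k : tnth (tmap Q x) k = \sum_i tnth x i * Q i k.
Proof. by rewrite tnth_mktuple !mxE; apply: eq_bigr => i _; rewrite mxE. Qed.

Lemma tnth_tmap_perm (s : 'S_d) x k :
  tnth (tmap (perm_mx s : 'M[R]_d) x) k = tnth x (s^-1 k)%g.
Proof.
rewrite tnth_tmap (bigD1 (s^-1 k)%g) //= big1 ?addr0; first by rewrite !mxE permKV eqxx mulr1.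
by move=> i ik; rewrite !mxE -(inj_eq (@perm_inj _ s^-1)) permK (negbTE ik) mulr0.
Qed.

Lemma perm_mx_orthogonal (s : 'S_d) : (perm_mx s : 'M[R]_d) *m (perm_mx s)^T = 1%:M.
Proof. by rewrite tr_perm_mx -perm_mxM mulgV perm_mx1. Qed.

Lemma measurable_tdot u : measurable_fun setT (tdot ^~ u).
Proof.
apply: measurable_sum => i; apply: measurable_funM; last exact: measurable_cst.
exact: measurable_tnth.
Qed.

Lemma measurable_tmap (Q : 'M[R]_d) : measurable_fun setT (tmap Q).
Proof.
apply/(measurable_fun_tnthP (tmap Q)) => k.
rewrite (_ : _ \o _ = fun x => \sum_i tnth x i * Q i k); last first.
  by apply/funext => x /=; rewrite tnth_tmap.
apply: measurable_sum => i; apply: measurable_funM; last exact: measurable_cst.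
exact: measurable_tnth.
Qed.

Lemma measurable_unit_sphere : measurable (@unit_sphere R d).
Proof.
have msum : measurable_fun setT (fun x : T => \sum_(i < d) tnth x i ^+ 2).
  by apply: measurable_sum => i; apply: measurable_funX; exact: measurable_tnth.
by have := msum measurableT [set 1] (measurable_set1 1); rewrite setTI.
Qed.

Lemma measurable_ge_set (f : T -> R) a : measurable_fun setT f ->
  measurable [set x | a <= f x].
Proof. by move=> mf; rewrite -preimage_itvcy -[_ @^-1` _]setTI; exact: mf. Qed.

Lemma sqr_tnth_le1 x j : @unit_sphere R d x -> tnth x j ^+ 2 <= 1.
Proof.
rewrite /unit_sphere /= (bigD1 j) //= => x1.
have : 0 <= \sum_(i | i != j) tnth x i ^+ 2 by apply: sumr_ge0 => i _; exact: sqr_ge0.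
lra.
Qed.

Lemma sqr_tnth2_le1 x j k : j != k -> @unit_sphere R d x ->
  tnth x j ^+ 2 + tnth x k ^+ 2 <= 1.
Proof.
move=> jk; rewrite /unit_sphere /= (bigD1 j) //= (bigD1 k) 1?eq_sym //= => x1.
have : 0 <= \sum_(i | (i != j) && (i != k)) tnth x i ^+ 2.
  by apply: sumr_ge0 => i _; exact: sqr_ge0.
lra.
Qed.

End tuple_maps.

Section cap_cover.
Variable R : realType.

Lemma grid_round (m : nat) (y : R) : (0 < m)%N -> -1 <= y <= 1 ->
  exists k : 'I_(2 * m).+1, (k%:R / m%:R - 1 - y) ^+ 2 <= m%:R ^- 2.
Proof.
move=> m0 /andP[y1 y2]; have m0' : 0 < m%:R :> R by rewrite ltr0n.
have z0 : 0 <= m%:R * (y + 1) by apply: mulr_ge0; [exact: ltW|lra].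
have /andP[zl zr] := truncn_itv z0; set k := Num.truncn _ in zl zr.
have k2m : (k < (2 * m).+1)%N.
  rewrite ltnS -(ler_nat R) natrM; apply: le_trans zl _.
  nra.
exists (Ordinal k2m); rewrite /= -(ler_pM2r (exprn_gt0 2 m0')) mulVf ?expf_neq0 ?gt_eqF //.
have -> : (k%:R / m%:R - 1 - y) ^+ 2 * m%:R ^+ 2 = (k%:R - m%:R * (y + 1)) ^+ 2.
  by field; rewrite gt_eqF.
rewrite -natr1 in zr; nra.
Qed.

Lemma sphere_cap_cover (d : nat) (delta : R) : 0 < delta < 1 ->
  exists us : seq 'rV[R]_d, (forall u, u \in us -> \sum_i u 0 i ^+ 2 = 1) /\
    forall x, unit_sphere x -> exists2 u, u \in us & delta <= tdot x u.
Proof.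
move=> hd; have /andP[d0 d1] := hd; set eta := (1 - delta) / 2.
have eta0 : 0 < eta by rewrite /eta; lra.
set m := (Num.truncn (d%:R / eta)).+1.
have m0 : 0 < m%:R :> R by rewrite ltr0n.
(* with mesh [1/m] the rounding error [d / m^2] is at most [eta^2] *)
have mesh : d%:R * m%:R ^- 2 <= eta ^+ 2 :> R.
  have /andP[_] := truncn_itv (divr_ge0 (ler0n R d) (ltW eta0)).
  rewrite -/m ltr_pdivrMr // => dm.
  have dd : d%:R <= d%:R ^+ 2 :> R.
    by rewrite -natrX ler_nat; case: (d) => // d'; rewrite expnS leq_pmulr ?expn_gt0.
  rewrite ler_pdivrMr ?exprn_gt0 //; have := ler0n R d; nra.
pose grid (K : 'rV['I_(2 * m).+1]_d) := \row_i ((K 0 i)%:R / m%:R - 1 : R).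
pose nrm (v : 'rV[R]_d) := (Num.sqrt (\sum_i v 0 i ^+ 2))^-1 *: v.
exists [seq nrm v | v : 'rV[R]_d <- [seq grid K | K : 'rV['I_(2 * m).+1]_d] & 0 < \sum_i v 0 i ^+ 2].
split.
  move=> u /mapP[v]; rewrite mem_filter => /andP[v0 _] ->.
  under eq_bigr do rewrite mxE exprMn.
  by rewrite -mulr_sumr exprVn sqr_sqrtr ?mulVf ?gt_eqF // ltW.
move=> x x1.
have /fin_all_exists[K HK] i : exists k : 'I_(2 * m).+1,
    (k%:R / m%:R - 1 - tnth x i) ^+ 2 <= m%:R ^- 2.
  by apply: grid_round => //; have := sqr_tnth_le1 i x1; nra.
set v := grid (\row_i K i).
have vE i : v 0 i = (K i)%:R / m%:R - 1 by rewrite !mxE.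
have near : \sum_i (v 0 i - tnth x i) ^+ 2 <= eta ^+ 2.
  apply: le_trans mesh; rewrite -[d in X in X * _]card_ord -sumr_const mulr_suml.
  by apply: ler_sum => i _; rewrite vE mul1r.
have [v0 dv] := near_unit_dir hd x1 near.
exists (nrm v).
  by apply: map_f; rewrite mem_filter v0 /=; apply/mapP; exists (\row_i K i); rewrite ?mem_enum.
rewrite /tdot (eq_bigr (fun i => (Num.sqrt (\sum_i v 0 i ^+ 2))^-1 * (tnth x i * v 0 i))).
  by rewrite -mulr_sumr mulrC ler_pdivlMr ?sqrtr_gt0.
by move=> i _; rewrite mxE mulrCA.
Qed.

End cap_cover.

Section uniform_sphere.
Variables (R : realType) (n : nat) (P : probability (n.+1.-tuple R) R).
Hypothesis HP : is_uniform_sphere P.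
Local Notation T := (n.+1.-tuple R).
Local Notation S := (@unit_sphere R n.+1).

Lemma measure_sphereC : P (~` S) = 0%E.
Proof.
by rewrite probability_setC ?(proj1 HP) ?subee //; exact: measurable_unit_sphere.
Qed.

Lemma measure_setIS X : measurable X -> P (X `&` S) = P X.
Proof.
have mS := @measurable_unit_sphere R n.+1.
move=> mX; have mXS : measurable (X `\` S) by exact: measurableD.
rewrite -[in RHS](setUIDK X S) measureU0 //; first exact: measurableI.
by apply: subset_measure0 measure_sphereC => //; exact: measurableC.
Qed.

Lemma ae_sphere (Q : T -> Prop) : (forall x, S x -> Q x) -> {ae P, forall x, Q x}.
Proof.
move=> SQ; exists (~` S); split; first exact: measurableC (@measurable_unit_sphere R n.+1).
  exact: measure_sphereC.
by move=> x /= nQx Sx; exact/nQx/SQ.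
Qed.

Lemma integral_tmap (Q : 'M[R]_n.+1) (f : T -> \bar R) : Q *m Q^T = 1%:M ->
  measurable_fun setT f -> (forall x, 0 <= f x)%E ->
  (\int[P]_x f (tmap Q x) = \int[P]_x f x)%E.
Proof.
move=> HQ mf f0.
rewrite -[X in (\int[P]_(x in X) _)%E](preimage_setT (tmap Q)).
rewrite -(@ge0_integral_pushforward _ _ _ _ R (tmap Q) (measurable_tmap Q) P setT f
  measurableT mf (fun y _ => f0 y)).
apply: eq_measure_integral => [|_ A mA _ /=]; first exact: measurable_tmap.
by rewrite /pushforward (proj2 HP Q HQ A mA).
Qed.

Lemma measure_cap (u : 'rV[R]_n.+1) a : \sum_i u 0 i ^+ 2 = 1 ->
  P [set x | a <= tdot x u] = P [set x | a <= tnth x ord0].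
Proof.
move=> u1; have [Q [HQ Q0]] := orthogonal_col0 u1.
have mA : measurable [set x : T | a <= tnth x ord0].
  by apply: measurable_ge_set; exact: measurable_tnth.
rewrite -(proj2 HP Q HQ _ mA).
have tQ x : tnth (tmap Q x) ord0 = tdot x u.
  by rewrite tnth_tmap; apply: eq_bigr => i _; rewrite Q0.
by congr (P _); apply/seteqP; split => x /=; rewrite tQ.
Qed.

Lemma integral_sqr_tnth_le D j : measurable D ->
  (\int[P]_(x in D) (tnth x j ^+ 2)%:E <= P D)%E.
Proof.
move=> mD; rewrite -[leRHS]mul1e -integral_cst //.
apply: ae_ge0_le_integral => //.
- by move=> x _; rewrite lee_fin sqr_ge0.
- by apply/measurable_EFinP/measurable_funTS/measurable_funX; exact: measurable_tnth.
by apply: ae_sphere => x Sx _; rewrite lee_fin sqr_tnth_le1.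
Qed.

Lemma integral_sqr_tnth_swap (a : R) (j k : 'I_n.+1) : j != ord0 -> k != ord0 ->
  (\int[P]_(x in [set x | (a <= tnth x ord0)%R]) (tnth x j ^+ 2)%:E
   = \int[P]_(x in [set x | (a <= tnth x ord0)%R]) (tnth x k ^+ 2)%:E)%E.
Proof.
move=> j0 k0; set A := [set x : T | _].
have mA : measurable A by apply: measurable_ge_set; exact: measurable_tnth.
pose s := tperm j k; pose Q : 'M[R]_n.+1 := perm_mx s.
have sQ x i : tnth (tmap Q x) i = tnth x (s i) by rewrite tnth_tmap_perm tpermV.
have mk : measurable_fun setT ((fun x => (tnth x k ^+ 2)%:E) \_ A).
  apply/(measurable_restrictT _ mA)/measurable_funTS/measurable_EFinP.
  by apply: measurable_funX; exact: measurable_tnth.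
have k0' x : (0 <= ((fun x => (tnth x k ^+ 2)%:E) \_ A) x)%E.
  by apply: erestrict_ge0 => y _; rewrite lee_fin sqr_ge0.
rewrite integral_mkcond [RHS]integral_mkcond -(integral_tmap (perm_mx_orthogonal R s) mk k0').
apply: eq_integral => x _; rewrite /patch sQ /s tpermR.
suff -> : (tmap Q x \in A) = (x \in A) by [].
have e0 : tnth (tmap Q x) ord0 = tnth x ord0 by rewrite sQ tpermD.
by apply/idP/idP; rewrite !in_setE /A /= e0.
Qed.

Lemma measure_cap_gt0 (a : R) : 0 < a < 1 -> (0 < P [set x | (a <= tnth x ord0)%R])%E.
Proof.
move=> ha; have [us [us1 cover]] := sphere_cap_cover n.+1 ha.
set A := [set x : T | _].
pose F i := [set x : T | a <= tdot x us`_i].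
have mF i : measurable (F i) by apply: measurable_ge_set; exact: measurable_tdot.
have : (1 <= \sum_(i < size us) P (F i))%E.
  rewrite -(proj1 HP); apply: le_trans (Boole_inequality P (fun i (_ : (i < size us)%N) => mF i)).
  apply: le_measure; rewrite ?inE.
  - by apply/mem_set; exact: measurable_unit_sphere.
  - by apply/mem_set; exact: bigsetU_measurable.
  move=> x /cover[u uus xu]; rewrite -bigcup_mkord.
  by exists (index u us); [rewrite /= index_mem | rewrite /F /= nth_index].
rewrite lt0e measure_ge0 andbT; apply: contraTN => /eqP PA0.
rewrite big1 ?lee_fin -?ltNge ?ltr01 // => i _.
by rewrite measure_cap ?us1 ?mem_nth.
Qed.

End uniform_sphere.

Section conditional_second_moment.
Variables (R : realType) (n : nat) (P : probability (n.+2.-tuple R) R).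
Hypothesis HP : is_uniform_sphere P.
Variable delta : R.
Hypothesis hdelta : 0 < delta < 1.
Local Notation T := (n.+2.-tuple R).
Local Notation S := (@unit_sphere R n.+2).

Let c := Num.sqrt ((1 + delta) / 2).
Let g := Num.sqrt ((1 - delta) / 2).
Let s := Num.sqrt ((5 + 3 * delta) / 8).
Let i1 : 'I_n.+2 := lift ord0 ord0.
Let A := [set x : T | delta <= tnth x ord0].
Let C := [set x : T | s <= tnth x ord0].

Lemma sqrt_cap_parameters : [/\ 0 <= c < s, delta <= s, c * delta <= s,
  delta <= s * c & 2 * s * c * delta <= delta ^+ 2 + s ^+ 2 - g ^+ 2].
Proof.
have [d0 d1] := andP hdelta.
by apply: cap_parameters; rewrite ?sqrtr_ge0 ?sqr_sqrtr //; lra.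
Qed.

Let sqr_tnth01_le1 x : S x -> tnth x ord0 ^+ 2 + tnth x i1 ^+ 2 <= 1.
Proof. exact: sqr_tnth2_le1 (neq_lift _ _). Qed.

Let dir (b : R) : 'rV[R]_n.+2 :=
  \row_i (if i == ord0 then c else if i == i1 then b else 0).

Let dirE b (i : 'I_n) : dir b 0 (lift ord0 (lift ord0 i)) = 0.
Proof. by rewrite mxE. Qed.

Lemma tdot_dir x b : tdot x (dir b) = c * tnth x ord0 + b * tnth x i1.
Proof.
rewrite /tdot !big_ord_recl big1 => [|i _]; last by rewrite dirE mulr0.
by rewrite !mxE /= addr0 [c * _]mulrC [b * _]mulrC.
Qed.

Lemma sqr_dir b : \sum_i dir b 0 i ^+ 2 = c ^+ 2 + b ^+ 2.
Proof.
rewrite !big_ord_recl big1 => [|i _]; last by rewrite dirE expr0n.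
by rewrite !mxE /= addr0.
Qed.

(* The caps [D g] and [D (- g)] around [dir (+-g)] both have the measure of [C];
   on the sphere they are disjoint and contained in [A]. *)
Lemma measure_two_caps_le : (P C + P C <= P A)%E.
Proof.
have [/andP[c0 cs] _ cds dsc qd] := sqrt_cap_parameters.
have cg1 : c ^+ 2 + g ^+ 2 = 1 by have [d0 d1] := andP hdelta; rewrite !sqr_sqrtr; lra.
have g0 : 0 <= g := sqrtr_ge0 _.
have mS := @measurable_unit_sphere R n.+2.
pose D b := [set x : T | s <= tdot x (dir b)].
have mD b : measurable (D b) by apply: measurable_ge_set; exact: measurable_tdot.
have PD b : b ^+ 2 = g ^+ 2 -> P (D b) = P C.
  by move=> bg; rewrite (measure_cap HP) // sqr_dir bg.
rewrite -{1}(PD g) // -(PD (- g)) ?sqrrN // -(measure_setIS HP (mD g)).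
have mDS b : measurable (D b `&` S) by exact: measurableI.
rewrite -(measure_setIS HP (mD (- g))) -measureU ?mDS//; last first.
  rewrite -subset0 => x [[xg Sx] [xNg _]]; rewrite /D /= !tdot_dir in xg xNg.
  apply: (caps_disjoint _ (sqr_tnth01_le1 Sx) xg); first by rewrite c0.
  by rewrite -mulNr.
apply: le_measure; rewrite ?inE.
- by apply/mem_set; apply: measurableU; exact: measurableI.
- by apply/mem_set; apply: measurable_ge_set; exact: measurable_tnth.
move=> x [] [xb Sx]; rewrite /D /= tdot_dir in xb; rewrite /A /=.
  exact: (cap_sub_halfplane c0 g0 cg1 cds dsc qd (sqr_tnth01_le1 Sx) xb).
apply: (cap_sub_halfplane c0 g0 cg1 cds dsc qd (y := - tnth x i1)).
  by rewrite sqrrN; exact: sqr_tnth01_le1 Sx.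
by rewrite mulrN -mulNr.
Qed.

Let mA : measurable A.
Proof. by apply: measurable_ge_set; exact: measurable_tnth. Qed.

Let mC : measurable C.
Proof. by apply: measurable_ge_set; exact: measurable_tnth. Qed.

Lemma measure_band_ge : fine (P A) / 2 <= fine (P (A `\` C)).
Proof.
have [_ ds _ _ _] := sqrt_cap_parameters.
have CA : C `<=` A by move=> x; rewrite /A /C /=; exact: le_trans.
have fP X : measurable X -> P X \is a fin_num by move=> mX; exact: fin_num_measure.
have mAC := measurableD mA mC.
have := measureDI P mA mC; rewrite (setIidr CA) => /(congr1 fine).
rewrite fineD ?fP // => hA.
have hC : fine (P C + P C) <= fine (P A).
  by apply: fine_le; rewrite ?inE ?fin_numD ?fP //; exact: measure_two_caps_le.
rewrite fineD ?fP // in hC; lra.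
Qed.

Lemma second_moments_sum_ge : ((1 - s ^+ 2)%:E * P (A `\` C)
  <= \sum_(j < n.+1) \int[P]_(x in A) (tnth x (lift ord0 j) ^+ 2)%:E)%E.
Proof.
have [d0 d1] := andP hdelta.
have s0 : 0 <= s := sqrtr_ge0 _.
have s2 : s ^+ 2 = (5 + 3 * delta) / 8 by rewrite sqr_sqrtr //; lra.
pose f (j : 'I_n.+1) (x : T) := (tnth x (lift ord0 j) ^+ 2)%:E.
have mf j : measurable_fun setT (f j).
  by apply/measurable_EFinP/measurable_funX; exact: measurable_tnth.
have f0 j x : (0 <= f j x)%E by rewrite lee_fin sqr_ge0.
have mAC := measurableD mA mC.
have mfA j : measurable_fun A (f j) := measurable_funTS (mf j).
have f0A j x : A x -> (0 <= f j x)%E by move=> _; exact: f0.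
rewrite -ge0_integral_sum //.
apply: (@le_trans _ _ (\int[P]_(x in A `\` C) \sum_(j < n.+1) f j x)%E); last first.
  apply: ge0_subset_integral => //; last by move=> x _; exact: sume_ge0.
  by apply: emeasurable_sum => j; exact: measurable_funTS.
rewrite -integral_cst //; apply: ae_ge0_le_integral => //.
- by move=> x _; rewrite lee_fin s2; lra.
- by move=> x _; exact: sume_ge0.
- by apply: emeasurable_sum => j; exact: measurable_funTS.
apply: (ae_sphere HP) => x Sx [/= xd /negP]; rewrite -ltNge => xs.
rewrite sumEFin lee_fin.
move: Sx; rewrite /unit_sphere /= big_ord_recl => x1.
have x00 : 0 <= tnth x ord0 by move: xd; rewrite /A /=; lra.
have : tnth x ord0 ^+ 2 <= s ^+ 2 by rewrite ler_pXn2r ?nnegrE // ltW.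
rewrite /f; lra.
Qed.

Let I := (\int[P]_(x in A) (tnth x i1 ^+ 2)%:E)%E.

Let I_fin : I \is a fin_num.
Proof.
rewrite ge0_fin_numE; last by apply: integral_ge0 => x _; rewrite lee_fin sqr_ge0.
by rewrite (le_lt_trans (integral_sqr_tnth_le HP _ mA)) // ltey_eq fin_num_measure.
Qed.

Lemma c2E : c2 P delta = fine I / fine (P A).
Proof.
rewrite /c2.
have -> : [set x : T | delta <= nth 0 x 0] = A.
  by apply/seteqP; split => x; rewrite /A /= (tnth_nth 0).
have -> : (fun x : T => (nth 0 x 1 ^+ 2)%:E) = fun x => (tnth x i1 ^+ 2)%:E.
  by apply/funext => x; rewrite (tnth_nth 0).
by [].
Qed.

Lemma second_moment_ge : 3 * (1 - delta) / 16 * fine (P A) <= n.+1%:R * fine I.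
Proof.
have [d0 d1] := andP hdelta.
have := second_moments_sum_ge.
rewrite (eq_bigr (fun=> I)) => [|j _]; last first.
  by rewrite (integral_sqr_tnth_swap HP _ (k := i1)) // eq_sym neq_lift.
rewrite -(fineK I_fin) -(fineK (fin_num_measure P _ (measurableD mA mC))) sumEFin.
rewrite -EFinM lee_fin sumr_const card_ord -mulr_natl sqr_sqrtr; last lra.
have : 3 * (1 - delta) / 8 * (fine (P A) / 2) <= 3 * (1 - delta) / 8 * fine (P (A `\` C)).
  by rewrite ler_wpM2l ?measure_band_ge //; lra.
lra.
Qed.

Lemma c2_ge : (3 * n.+2%:R)^-1 * (3 / 4 - delta / 2 - delta ^+ 2 / 4) ^+ 3
  <= c2 P delta.
Proof.
have PA0 := measure_cap_gt0 HP hdelta.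
rewrite -/A -(fineK (fin_num_measure P _ mA)) lte_fin in PA0.
have k1 : 1 <= n.+1%:R :> R by rewrite ler1n.
rewrite c2E -[n.+2%:R]natr1; apply: le_trans (cube_bound hdelta k1) _.
rewrite ler_pdivlMr // mulrAC ler_pdivrMr ?mulr_gt0 ?ltr0n //.
by have := second_moment_ge; lra.
Qed.

End conditional_second_moment.

Theorem lemma6 (R : realType) (d : nat) (P : probability (d.-tuple R) R)
  (delta : R) :
  (2 <= d)%N -> is_uniform_sphere P -> 0 < delta < 1 ->
  (3 * d%:R)^-1 * (3 / 4 - delta / 2 - delta ^+ 2 / 4) ^+ 3 <= c2 P delta.
Proof.
by case: d P => [|[|n]] P // _ HP hdelta; exact (c2_ge HP hdelta).
Qed.
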